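(* The Fomin–Kirillov algebra $\mathcal{E}_3$ admits no truncated point modules of degree greater than $1$; in particular $\mathcal{P}_2(\mathcal{E}_3)=\emptyset$.
   Context: Over an algebraically closed field $k$, $\mathcal{E}_3$ is the graded algebra generated by degree-$1$ elements $x_{12},x_{13},x_{23}$ subject to $x_{12}^2=x_{13}^2=x_{23}^2=0$, $x_{12}x_{23}-x_{23}x_{13}-x_{13}x_{12}=0$ and $x_{23}x_{12}-x_{13}x_{23}-x_{12}x_{13}=0$. A degree-$d$ truncated point module over a connected graded algebra $A$ generated in degree $1$ is a graded cyclic module generated in degree $0$ with Hilbert series $1+t+\cdots+t^d$; $\mathcal{P}_d(A)$ is the space of such modules. *)

From HB Require Import structures.
From mathcomp Require Import all_boot all_order all_algebra.
Set Implicit Arguments. Unset Strict Implicit. Unset Printing Implicit Defensive.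
Import GRing.Theory.
Local Open Scope ring_scope.

(* Graded module M = (+)_i M_i with M_i = 'rV[k]_(hdim d i), so that
   dim M_i = 1 for i <= d and 0 otherwise (Hilbert series 1 + t + ... + t^d).
   The generator x_j acts M_i -> M_{i+1} by v |-> v *m X i j (row vectors). *)

Definition hdim (d i : nat) : nat := if (i <= d)%N then 1%N else 0%N.

Definition x12 : 'I_3 := @Ordinal 3 0 isT.
Definition x13 : 'I_3 := @Ordinal 3 1 isT.
Definition x23 : 'I_3 := @Ordinal 3 2 isT.

Section TPM.
Variables (k : fieldType) (d : nat).
Variable X : forall i : nat, 'I_3 -> 'M[k]_(hdim d i, hdim d i.+1).

(* matrix of the action of the monomial x_a x_b : M_i -> M_{i+2}
   (first x_b, then x_a) *)
Definition act2 (i : nat) (a b : 'I_3) : 'M[k]_(hdim d i, hdim d i.+2) :=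
  X i b *m X i.+1 a.

Definition E3_relations_hold : Prop :=
  forall i : nat,
    [/\ act2 i x12 x12 = 0, act2 i x13 x13 = 0, act2 i x23 x23 = 0,
        act2 i x12 x23 - act2 i x23 x13 - act2 i x13 x12 = 0
      & act2 i x23 x12 - act2 i x13 x23 - act2 i x12 x13 = 0].

(* M is generated by its degree-0 part: M_{i+1} = x12 M_i + x13 M_i + x23 M_i
   for every i (row space of the sum equals the whole space). *)
Definition generated_in_degree0 : Prop :=
  forall i : nat, (1%:M <= \sum_(j < 3) <<X i j>>)%MS.

Definition is_truncated_point_module_E3 : Prop :=
  E3_relations_hold /\ generated_in_degree0.
End TPM.

From HB Require Import structures.
From mathcomp Require Import all_boot all_order all_algebra.
From mathcomp Require Import ring.
Set Implicit Arguments.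
Unset Strict Implicit.
Unset Printing Implicit Defensive.
Import GRing.Theory.
Local Open Scope ring_scope.

(* In degrees 0, 1 and 2 the module is one-dimensional, so x_j acts by a scalar
   a_j from degree 0 to 1 and by b_j from degree 1 to 2.  The relations of E_3
   then say a_j b_j = 0 and give two three-term relations among the a_i b_j.
   Any two terms of such a relation multiply to a multiple of some a_p b_p, so
   each term squares to zero; hence a_i b_j = 0 for all i, j.  Generation in
   degree 0 forces some a_i and some b_j to be nonzero, a contradiction. *)

Lemma orthogonal_triple_eq0 (R : idomainType) (x y z : R) :
  x - y - z = 0 -> x * y = 0 -> y * z = 0 -> z * x = 0 ->
  [/\ x = 0, y = 0 & z = 0].
Proof.
move=> /eqP; rewrite -addrA -opprD subr_eq0 => /eqP xE xy yz zx.
have sqr_eq0 (u : R) : u * u = 0 -> u = 0 by move/eqP; rewrite mulf_eq0 orbb => /eqP.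
split; apply: sqr_eq0.
- have -> : x * x = x * y + z * x by rewrite {1}xE; ring.
  by rewrite xy zx addr0.
- have -> : y * y = x * y - y * z by rewrite xE; ring.
  by rewrite xy yz subr0.
- have -> : z * z = z * x - y * z by rewrite xE; ring.
  by rewrite zx yz subr0.
Qed.

Lemma ord3P (j : 'I_3) : [\/ j = x12, j = x13 | j = x23].
Proof. by case: j => -[|[|[|]]] // ?; [apply: Or31 | apply: Or32 | apply: Or33]; apply: val_inj. Qed.

Lemma E3_coef_mul_eq0 (R : idomainType) (a b : 'I_3 -> R) :
  a x12 * b x12 = 0 -> a x13 * b x13 = 0 -> a x23 * b x23 = 0 ->
  a x23 * b x12 - a x13 * b x23 - a x12 * b x13 = 0 ->
  a x12 * b x23 - a x23 * b x13 - a x13 * b x12 = 0 ->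
  forall i j, a i * b j = 0.
Proof.
move=> d12 d13 d23 r4 r5.
have diag p : a p * b p = 0 by case: (ord3P p) => ->.
have diag_ab p q r : a p * b q * (a r * b p) = 0.
  have -> : a p * b q * (a r * b p) = a p * b p * (a r * b q) by ring.
  by rewrite diag mul0r.
have diag_ba p q r : a p * b q * (a q * b r) = 0 by rewrite mulrC diag_ab.
have [? ? ?] := orthogonal_triple_eq0 r4 (diag_ab _ _ _) (diag_ab _ _ _) (diag_ab _ _ _).
have [? ? ?] := orthogonal_triple_eq0 r5 (diag_ba _ _ _) (diag_ba _ _ _) (diag_ba _ _ _).
by move=> i j; case: (ord3P i) => ->; case: (ord3P j) => ->.
Qed.

Lemma spanning_exists_neq0 (R : fieldType) (m n p : nat) (A : 'I_n -> 'M[R]_(m, p.+1)) :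
  (1%:M <= \sum_(j < n) <<A j>>)%MS -> exists j, A j != 0.
Proof.
have [j Aj _ | A0] := pickP (fun j => A j != 0); first by exists j.
rewrite big1 => [|j _]; first by rewrite submx0 oner_eq0.
by move/negbFE/eqP: (A0 j) => ->; rewrite genmx0.
Qed.

Lemma mx11_eq0 (R : nmodType) (A : 'M[R]_1) : (A == 0) = (A 0 0 == 0).
Proof.
apply/eqP/eqP => [-> | A00]; first by rewrite mxE.
by rewrite [A]mx11_scalar A00 raddf0.
Qed.

Lemma E3_rel_mx11_not_generated (k : fieldType) (A B : 'I_3 -> 'M[k]_1) :
  [/\ A x12 *m B x12 = 0, A x13 *m B x13 = 0, A x23 *m B x23 = 0,
      A x23 *m B x12 - A x13 *m B x23 - A x12 *m B x13 = 0
    & A x12 *m B x23 - A x23 *m B x13 - A x13 *m B x12 = 0] ->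
  (1%:M <= \sum_(j < 3) <<A j>>)%MS -> ~ (1%:M <= \sum_(j < 3) <<B j>>)%MS.
Proof.
have entry00 (M : 'M[k]_1) : M = 0 -> M 0 0 = 0 by move->; rewrite mxE.
case=> /entry00 r1 /entry00 r2 /entry00 r3 /entry00 r4 /entry00 r5.
rewrite !mxE !big_ord1 in r1 r2 r3 r4 r5.
move=> /spanning_exists_neq0[i Ai] /spanning_exists_neq0[j Bj].
have /eqP := E3_coef_mul_eq0 (a := fun j => A j 0 0) (b := fun j => B j 0 0) r1 r2 r3 r4 r5 i j.
by apply/negP; rewrite mulf_neq0 // -mx11_eq0.
Qed.

Theorem proposition2p1 (k : closedFieldType) (d : nat) (hd : (2 <= d)%N)
  (X : forall i : nat, 'I_3 -> 'M[k]_(hdim d i, hdim d i.+1)) :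
  ~ is_truncated_point_module_E3 X.
Proof.
(* once d >= 2 is explicit, hdim d i reduces to 1 for i <= 2 *)
case: d hd X => [|[|d]] // _ X [rel gen].
exact: (E3_rel_mx11_not_generated (rel 0%N) (gen 0%N) (gen 1%N)).
Qed.
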